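(* Let $K$ be a field, $\mathcal A$ a $K$-algebra, $\vartheta$ any one of the four types (left, right, pre-two-sided, two-sided), $M$ a $\vartheta$-Mathieu subspace of $\mathcal A$, and $a\in\mathcal A$ algebraic over $K$. Then $a\in\sqrt M$ if and only if $(a^N)_\vartheta\subseteq M$ for some integer $N\ge 0$.
   Context: All algebras are associative and unital. For a subset $S\subseteq\mathcal A$, $\sqrt S$ is the set of $a\in\mathcal A$ with $a^m\in S$ for all sufficiently large $m$. Let $M$ be a $K$-subspace of $\mathcal A$. $M$ is a left (resp. right) Mathieu subspace if whenever $a\in\mathcal A$ satisfies $a^m\in M$ for all $m\ge1$, then for every $b\in\mathcal A$ there is $N$ with $ba^m\in M$ (resp. $a^mb\in M$) for all $m\ge N$; pre-two-sided if it is both left and right; two-sided if whenever $a^m\in M$ for all $m\ge1$, for all $b,c\in\mathcal A$ there is $N$ with $ba^mc\in M$ for all $m\ge N$. For $x\in\mathcal A$: $(x)_\vartheta$ is $\mathcal Ax$ if $\vartheta$ = left, $x\mathcal A$ if $\vartheta$ = right, the two-sided ideal generated by $x$ if $\vartheta$ = two-sided, and $x\mathcal A+\mathcal Ax$ if $\vartheta$ = pre-two-sided. *)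

From HB Require Import structures.
From mathcomp Require Import all_boot all_order all_algebra.
Set Implicit Arguments. Unset Strict Implicit. Unset Printing Implicit Defensive.
Import Order.TTheory GRing.Theory Num.Theory.
Local Open Scope ring_scope.

Inductive mtype := MLeft | MRight | MPreTwo | MTwo.

Section Defs.
Variables (K : fieldType) (A : algType K).

Definition is_subspace (M : {pred A}) : Prop :=
  0 \in M /\ forall (k : K) (u v : A), u \in M -> v \in M -> k *: u + v \in M.

Definition algebraic_over (a : A) : Prop :=
  exists p : {poly K}, p != 0 /\ horner_alg a p = 0.

Definition in_radical (M : {pred A}) (a : A) : Prop :=
  exists N : nat, forall m : nat, (N <= m)%N -> a ^+ m \in M.

Definition all_powers_in (M : {pred A}) (a : A) : Prop :=
  forall m : nat, (1 <= m)%N -> a ^+ m \in M.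

Definition left_mathieu (M : {pred A}) : Prop :=
  forall a : A, all_powers_in M a ->
  forall b : A, exists N : nat, forall m : nat, (N <= m)%N -> b * a ^+ m \in M.

Definition right_mathieu (M : {pred A}) : Prop :=
  forall a : A, all_powers_in M a ->
  forall b : A, exists N : nat, forall m : nat, (N <= m)%N -> a ^+ m * b \in M.

Definition two_sided_mathieu (M : {pred A}) : Prop :=
  forall a : A, all_powers_in M a ->
  forall b c : A, exists N : nat, forall m : nat, (N <= m)%N -> b * a ^+ m * c \in M.

Definition mathieu (t : mtype) (M : {pred A}) : Prop :=
  match t with
  | MLeft => left_mathieu M
  | MRight => right_mathieu M
  | MPreTwo => left_mathieu M /\ right_mathieu M
  | MTwo => two_sided_mathieu M
  end.

Definition in_gen (t : mtype) (x y : A) : Prop :=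
  match t with
  | MLeft => exists b : A, y = b * x
  | MRight => exists b : A, y = x * b
  | MPreTwo => exists b c : A, y = x * b + c * x
  | MTwo => exists s : seq (A * A), y = \sum_(q <- s) q.1 * x * q.2
  end.

End Defs.

From HB Require Import structures.
From mathcomp Require Import all_boot all_order all_algebra.
Set Implicit Arguments.
Unset Strict Implicit.
Unset Printing Implicit Defensive.

Import GRing.Theory.
Local Open Scope ring_scope.

(* If a^m lies in M for all large m and p(a) = 0 with p = X^r q, q(0) != 0,
   then for R >= r a Bezout identity u X^R + v q = 1 yields the idempotent
   e = u(a) a^R, which satisfies e a^R = a^R e = a^R.  Taking R large puts e
   in M, being a combination of high powers of a.  All powers of e equal e,
   so the Mathieu property of M makes (e)_t lie in M, and (a^R)_t is
   contained in (e)_t.  The converse holds because a^m is in (a^N)_t for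
   every m >= N. *)

Section AlgebraicPowers.
Variables (K : fieldType) (A : algType K).

Lemma horner_algXn (a : A) (n : nat) : horner_alg a 'X^n = a ^+ n.
Proof. by rewrite rmorphXn /= horner_algX. Qed.

Lemma horner_alg_comm (a : A) (p q : {poly K}) :
  horner_alg a p * horner_alg a q = horner_alg a q * horner_alg a p.
Proof. by rewrite -!rmorphM mulrC. Qed.

Lemma algebraic_expr_local_unit (a : A) (N0 : nat) : algebraic_over a ->
  exists R (w : {poly K}),
    (N0 <= R)%N /\ horner_alg a (w * 'X^R) * a ^+ R = a ^+ R.
Proof.
case=> p [p0 pa0]; have [r [q q0 Ep]] := multiplicity_XsubC p 0.
rewrite p0 polyC0 subr0 /= in q0 Ep.
exists (maxn r N0); set R := maxn r N0.
have rR : (r <= R)%N := leq_maxl r N0.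
have /Bezout_eq1_coprimepP[[u v] /= Huv] : coprimep ('X^R) q.
  by rewrite -(subr0 'X) -polyC0 coprimep_expl // coprimep_sym coprimep_XsubC.
have XRqa0 : horner_alg a ('X^R * q) = 0.
  by rewrite -(subnK rR) exprD mulrC mulrCA -Ep rmorphM /= pa0 mulr0.
exists u; split; first exact: leq_maxr.
rewrite -horner_algXn -rmorphM -[X in _ = horner_alg a X]mul1r -Huv.
rewrite mulrDl rmorphD /=.
by rewrite -(mulrA v) [q * _]mulrC (rmorphM _ v) /= XRqa0 mulr0 addr0.
Qed.

End AlgebraicPowers.

Section MathieuSubspace.
Variables (K : fieldType) (A : algType K) (M : {pred A}).

Lemma subspace_add : is_subspace M -> {in M &, forall u v, u + v \in M}.
Proof. by move=> HM u v Mu Mv; have := HM.2 1 u v Mu Mv; rewrite scale1r. Qed.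

Lemma subspace_sum (I : Type) (s : seq I) (F : I -> A) : is_subspace M ->
  (forall i, F i \in M) -> \sum_(i <- s) F i \in M.
Proof.
move=> HM MF; elim: s => [|i s IHs]; first by rewrite big_nil; exact: HM.1.
by rewrite big_cons subspace_add.
Qed.

Lemma subspace_horner_alg_mulXn (a : A) (w : {poly K}) (n : nat) :
  is_subspace M -> (forall j, (n <= j)%N -> a ^+ j \in M) ->
  horner_alg a (w * 'X^n) \in M.
Proof.
move=> HM; elim/poly_ind: w n => [|w c IHw] n Man.
  by rewrite mul0r rmorph0; exact: HM.1.
rewrite mulrDl -mulrA -exprS rmorphD /= addrC mul_polyC linearZ /=.
rewrite mulr_algl horner_algXn.
by apply: HM.2; [exact: Man | apply: IHw => j /ltnW; exact: Man].
Qed.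

Variable e : A.
Hypotheses (Me : e \in M) (ee : e * e = e).

Lemma idempotent_expr (m : nat) : (0 < m)%N -> e ^+ m = e.
Proof. by elim: m => [|[|m] IHm] // _; rewrite exprS IHm. Qed.

Lemma idempotent_all_powers_in : all_powers_in M e.
Proof. by move=> m /idempotent_expr ->. Qed.

Lemma idempotent_eventually (P : A -> Prop) :
  (exists N, forall m, (N <= m)%N -> P (e ^+ m)) -> P e.
Proof. by case=> N PN; rewrite -(@idempotent_expr N.+1) //; exact: PN. Qed.

Lemma left_mathieu_idempotent b : left_mathieu M -> b * e \in M.
Proof.
move=> HL; apply: (@idempotent_eventually (fun x => b * x \in M)).
exact: HL idempotent_all_powers_in b.
Qed.

Lemma right_mathieu_idempotent b : right_mathieu M -> e * b \in M.
Proof.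
move=> HR; apply: (@idempotent_eventually (fun x => x * b \in M)).
exact: HR idempotent_all_powers_in b.
Qed.

Lemma two_sided_mathieu_idempotent b c : two_sided_mathieu M -> b * e * c \in M.
Proof.
move=> HT; apply: (@idempotent_eventually (fun x => b * x * c \in M)).
exact: HT idempotent_all_powers_in b c.
Qed.

Lemma mathieu_gen_idempotent (t : mtype) (x y : A) :
  is_subspace M -> mathieu t M -> x * e = x -> e * x = x ->
  in_gen t x y -> y \in M.
Proof.
move=> HM + xe ex; case: t => /=.
- by move=> HL [b ->]; rewrite -xe mulrA left_mathieu_idempotent.
- by move=> HR [b ->]; rewrite -ex -mulrA right_mathieu_idempotent.
- move=> [HL HR] [b [c ->]]; apply: subspace_add => //.
    by rewrite -ex -mulrA right_mathieu_idempotent.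
  by rewrite -xe mulrA left_mathieu_idempotent.
- move=> HT [s ->]; apply: subspace_sum => // -[b c] /=.
  by rewrite -ex mulrA -(mulrA (b * e)) two_sided_mathieu_idempotent.
Qed.

End MathieuSubspace.

Lemma in_gen_expr (K : fieldType) (A : algType K) (t : mtype) (a : A) (N m : nat) :
  (N <= m)%N -> in_gen t (a ^+ N) (a ^+ m).
Proof.
move=> Nm; have aml : a ^+ m = a ^+ (m - N) * a ^+ N by rewrite -exprD subnK.
have amr : a ^+ m = a ^+ N * a ^+ (m - N) by rewrite -exprD subnKC.
case: t => /=; first by exists (a ^+ (m - N)).
- by exists (a ^+ (m - N)).
- by exists (a ^+ (m - N)), 0; rewrite mul0r addr0.
- by exists [:: (1, a ^+ (m - N))]; rewrite big_seq1 mul1r.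
Qed.

Theorem theorem3p10 (K : fieldType) (A : algType K) (t : mtype) (M : {pred A})
  (HM : is_subspace M) (Hmath : mathieu t M) (a : A) (Halg : algebraic_over a) :
  in_radical M a <->
  exists N : nat, forall y : A, in_gen t (a ^+ N) y -> y \in M.
Proof.
split=> [[N0 MaN0] | [N MaN]]; last first.
  by exists N => m Nm; apply: MaN; exact: in_gen_expr.
have [R [w [N0R eaR]]] := algebraic_expr_local_unit N0 Halg.
set e := horner_alg a (w * 'X^R) in eaR.
have aRe : a ^+ R * e = a ^+ R.
  by rewrite -horner_algXn horner_alg_comm horner_algXn.
have ee : e * e = e.
  by rewrite {1}/e rmorphM /= horner_algXn -mulrA aRe -horner_algXn -rmorphM.
have Me : e \in M.
  by apply: subspace_horner_alg_mulXn => // j /(leq_trans N0R); exact: MaN0.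
by exists R => y; apply: (mathieu_gen_idempotent Me ee HM Hmath).
Qed.
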